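(* There exists an absolute constant $c_1>0$ with the following property. Let $(m_n)$ and $(M_n)$ be sequences with $0<m_n\le M_n$ and $M_n/m_n=o(n)$ as $n\to\infty$. Then for all sufficiently large $n$, every $V\in\mathcal{L}_n(m_n,M_n)$ is invertible and \[ \bigl\|V^{-1}-S\bigr\|\le \frac{c_1 M_n^2}{m_n^3 (n-1)^2}, \] where $S=S(V)$ is the matrix associated with $V$ defined in the context.
   Context: For a matrix $A=(a_{i,j})$, $\|A\|:=\max_{i,j}|a_{i,j}|$. Class $\mathcal{L}_n(m,M)$: for $0<m\le M$, a $(2n-1)\times(2n-1)$ real symmetric matrix $V=(v_{i,j})$ belongs to $\mathcal{L}_n(m,M)$ if: (i) $v_{i,j}=0$ whenever $i\ne j$ and both $i,j\in\{1,\dots,n\}$, or both $i,j\in\{n+1,\dots,2n-1\}$; (ii) $v_{i,n+i}=v_{n+i,i}=0$ for $i=1,\dots,n-1$; (iii) $m\le v_{i,j}=v_{j,i}\le M$ for $i\in\{1,\dots,n\}$, $j\in\{n+1,\dots,2n-1\}$, $j\neq n+i$; (iv) $m\le v_{i,i}-\sum_{j=n+1}^{2n-1}v_{i,j}\le M$ for $i=1,\dots,n-1$, and $v_{n,n}=\sum_{j=n+1}^{2n-1}v_{n,j}$; (v) $v_{i,i}=\sum_{k=1}^n v_{k,i}$ for $i=n+1,\dots,2n-1$. Associated quantities: $v_{2n,i}=v_{i,2n}:=v_{i,i}-\sum_{j=1,j\ne i}^{2n-1}v_{i,j}$ for $i=1,\dots,2n-1$, and $v_{2n,2n}:=\sum_{i=1}^{2n-1}v_{2n,i}$.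 The $(2n-1)\times(2n-1)$ matrix $S=(s_{i,j})$ is defined by $s_{i,j}=\delta_{i,j}/v_{i,i}+1/v_{2n,2n}$ if $i,j\in\{1,\dots,n\}$ or $i,j\in\{n+1,\dots,2n-1\}$, and $s_{i,j}=-1/v_{2n,2n}$ if one of $i,j$ lies in $\{1,\dots,n\}$ and the other in $\{n+1,\dots,2n-1\}$; here $\delta_{i,j}$ is the Kronecker delta. *)

(* Indices are 0-based: paper index p corresponds to i = p-1.
   First block {1..n}  <-> i < n ; second block {n+1..2n-1} <-> n <= i < 2n-1. *)
From HB Require Import structures.
From mathcomp Require Import all_boot all_order all_algebra.
Set Implicit Arguments. Unset Strict Implicit. Unset Printing Implicit Defensive.
Import Order.TTheory GRing.Theory Num.Theory.
Local Open Scope ring_scope.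

Notation dimL n := ((n.*2).-1)%N.

Definition mxnorm (R : realFieldType) (p q : nat) (A : 'M[R]_(p, q)) : R :=
  \big[Num.max/0]_(i < p) \big[Num.max/0]_(j < q) `|A i j|.

Definition inL (R : realFieldType) (n : nat) (m M : R) (V : 'M[R]_(dimL n)) : Prop :=
  V^T = V /\
      (forall i j : 'I_(dimL n), i != j -> ((i < n)%N = (j < n)%N) -> V i j = 0) /\
      (forall i j : 'I_(dimL n), (i < n.-1)%N -> (j : nat) = (n + i)%N ->
          V i j = 0 /\ V j i = 0) /\
      (forall i j : 'I_(dimL n), (i < n)%N -> (n <= j)%N -> (j : nat) != (n + i)%N ->
          m <= V i j <= M /\ V i j = V j i) /\
      (forall i : 'I_(dimL n), (i < n.-1)%N ->
          m <= V i i - \sum_(j < dimL n | (n <= j)%N) V i j <= M) /\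
      (forall i : 'I_(dimL n), (i : nat) = n.-1 ->
          V i i = \sum_(j < dimL n | (n <= j)%N) V i j) /\
      (forall i : 'I_(dimL n), (n <= i)%N ->
          V i i = \sum_(k < dimL n | (k < n)%N) V k i).

(* v_{2n,i} = v_{i,i} - sum_{j <> i} v_{i,j} *)
Definition vlast (R : realFieldType) (n : nat) (V : 'M[R]_(dimL n)) (i : 'I_(dimL n)) : R :=
  V i i - \sum_(j < dimL n | j != i) V i j.

(* v_{2n,2n} = sum_i v_{2n,i} *)
Definition vcorner (R : realFieldType) (n : nat) (V : 'M[R]_(dimL n)) : R :=
  \sum_(i < dimL n) vlast V i.

Definition Smat (R : realFieldType) (n : nat) (V : 'M[R]_(dimL n)) : 'M[R]_(dimL n) :=
  \matrix_(i, j)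
    if ((i < n)%N == (j < n)%N)
    then (if i == j then (V i i)^-1 else 0) + (vcorner V)^-1
    else - (vcorner V)^-1.

From HB Require Import structures.
From mathcomp Require Import all_boot all_order all_algebra.
From mathcomp Require Import ring lra zify.
Import Order.TTheory GRing.Theory Num.Theory.
Set Implicit Arguments. Unset Strict Implicit. Unset Printing Implicit Defensive.
Local Open Scope ring_scope.

(* Flipping the sign of the second block, x := blocksign * w, turns V w = f into
   rows of the form  v_kk x_k - sum_l |v_kl| x_l = +-f_k  with v_kk = a_k + sum_l |v_kl|,
   where a_k = v_{2n,k} >= 0 vanishes on the second block.  This is a discrete maximum
   principle: if [lo, hi] contains x, then comparing the rows where x is extremal on the
   first block, each of which sees all but one vertex of the second block with weight
   at least m, gives (n - 3) m (hi - lo) <= 2 (max |f| + n M delta), while the identity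
   sum_k a_k x_k = sum_k +-f_k pins the level of x to within
   delta = (max |f| + |sum_k +-f_k|) / ((n - 1) m).
   A column of V^-1 - S solves such a system with right-hand side of size O(M / (n m)),
   which yields the bound; the case f = 0 gives invertibility. *)

Lemma ler_sum_but_one (R : realFieldType) (I : finType) (P Q : pred I)
    (z y : I -> R) (m r : R) :
  0 <= m -> 0 <= r -> (forall i j, P i -> P j -> Q i -> Q j -> i = j) ->
  (forall i, P i -> 0 <= z i) -> (forall i, P i -> ~~ Q i -> m <= z i) ->
  (forall i, P i -> 0 <= y i <= r) ->
  m * (\sum_(i : I | P i) y i - r) <= \sum_(i : I | P i) z i * y i.
Proof.
move=> m_ge0 r_ge0 Q_uniq z_ge0 z_ge y_bd.
have my_le i : P i -> ~~ Q i -> m * y i <= z i * y i.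
  by move=> Pi nQi; case/andP: (y_bd i Pi) => y_ge0 _; rewrite ler_wpM2r ?z_ge.
case: (pickP (fun i => P i && Q i)) => [i0 /andP[Pi0 Qi0] | noQ]; last first.
  have : m * \sum_(i : I | P i) y i <= \sum_(i : I | P i) z i * y i.
    rewrite mulr_sumr; apply: ler_sum => i Pi; apply: my_le => //.
    by move: (noQ i); rewrite Pi /= => ->.
  by move=> h; have := mulr_ge0 m_ge0 r_ge0; lra.
rewrite (bigD1 i0) // [X in _ <= X](bigD1 i0) //=.
have : m * \sum_(i : I | P i && (i != i0)) y i <= \sum_(i : I | P i && (i != i0)) z i * y i.
  rewrite mulr_sumr; apply: ler_sum => i /andP[Pi ne_i]; apply: my_le => //.
  by apply: contra ne_i => Qi; rewrite (Q_uniq i i0).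
case/andP: (y_bd i0 Pi0) => y_ge0 y_le.
move=> h; have := mulr_ge0 (z_ge0 i0 Pi0) y_ge0; have := ler_wpM2l m_ge0 y_le; lra.
Qed.

Lemma ler_sum_but_one_cst (R : realFieldType) (I : finType) (P Q : pred I)
    (z : I -> R) (m : R) :
  0 <= m -> (forall i j, P i -> P j -> Q i -> Q j -> i = j) ->
  (forall i, P i -> 0 <= z i) -> (forall i, P i -> ~~ Q i -> m <= z i) ->
  (\sum_(i | P i) 1 - 1) * m <= \sum_(i | P i) z i.
Proof.
move=> m_ge0 Q_uniq z_ge0 z_ge; rewrite mulrC.
rewrite [X in _ <= X](eq_bigr (fun i => z i * 1)) => [|i _]; last by rewrite mulr1.
by apply: ler_sum_but_one Q_uniq z_ge0 z_ge _ => // i _; rewrite ler01 lexx.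
Qed.

Lemma ler_div_of_mul_le (R : realFieldType) (a v d phi : R) :
  0 < a -> a <= v -> 0 <= phi -> v * d <= phi -> d <= phi / a.
Proof.
move=> a_gt0 a_le_v phi_ge0 vd_le; rewrite ler_pdivlMr //.
have [d_le0|d_gt0] := leP d 0; first by have := mulr_le0_ge0 d_le0 (ltW a_gt0); lra.
by rewrite mulrC; apply: le_trans vd_le; rewrite ler_wpM2r // ltW.
Qed.

Section BlockMatrix.

Variables (R : realFieldType) (n : nat) (m M : R) (V : 'M[R]_(dimL n)).
Hypotheses (m_gt0 : 0 < m) (m_le_M : m <= M) (V_L : inL m M V).

Local Notation I := 'I_(dimL n).

Lemma M_gt0 : 0 < M. Proof. exact: lt_le_trans m_le_M. Qed.

Lemma block_B_n_gt1 (j : I) : (n <= j)%N -> (1 < n)%N.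
Proof. by have := ltn_ord j; move: (j : nat) => j'; rewrite -addnn; lia. Qed.

Lemma V_sym (i j : I) : V i j = V j i.
Proof. by case: V_L => VT _; rewrite -{1}VT mxE. Qed.

Lemma V_same_block (i j : I) : i != j -> (i < n)%N = (j < n)%N -> V i j = 0.
Proof. by case: V_L => _ [V0 _]; apply: V0. Qed.

Lemma V_cross_ge (i j : I) :
  (i < n)%N -> (n <= j)%N -> (j : nat) != (n + i)%N -> m <= V i j.
Proof. by case: V_L => _ [_ [_ [Vc _]]] iA jB ji; case/andP: (Vc i j iA jB ji).1. Qed.

Lemma V_cross_bounds (i j : I) : (i < n)%N -> (n <= j)%N -> 0 <= V i j <= M.
Proof.
case: V_L => _ [_ [Vd [Vc _]]] iA jB.
have [ji|ji] := eqVneq (j : nat) (n + i)%N; last first.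
  by case/andP: (Vc i j iA jB ji).1 => mV ->; rewrite (le_trans (ltW m_gt0) mV).
have i_lt : (i < n.-1)%N.
  by have := ltn_ord j; rewrite ji; move: (i : nat) => i'; rewrite -addnn; lia.
by rewrite (Vd i j i_lt ji).1 lexx ltW ?M_gt0.
Qed.

Lemma V_offdiag_bounds (k l : I) : k != l -> 0 <= V k l <= M.
Proof.
move=> kl; case kA: (k < n)%N; case lA: (l < n)%N.
- by rewrite V_same_block ?kA ?lA // lexx ltW ?M_gt0.
- by apply: V_cross_bounds; rewrite // leqNgt lA.
- by rewrite V_sym; apply: V_cross_bounds; rewrite // leqNgt kA.
- by rewrite V_same_block ?kA ?lA // lexx ltW ?M_gt0.
Qed.

Lemma sum_offdiag (k : I) (F : I -> R) : (forall j, V k j = 0 -> F j = 0) ->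
  \sum_(j : I | j != k) F j = \sum_(j : I | (j < n)%N != (k < n)%N) F j.
Proof.
move=> F0; rewrite (bigID (fun j : I => (j < n)%N == (k < n)%N)) /= big1 ?add0r.
  by apply: eq_bigl => j; case: eqVneq => [->|]; rewrite ?eqxx.
by move=> j /andP[jk /eqP jkA]; apply/F0/V_same_block; rewrite 1?eq_sym.
Qed.

Lemma sum_blockB (k : I) (F : I -> R) : (k < n)%N ->
  \sum_(j : I | (j < n)%N != (k < n)%N) F j = \sum_(j : I | (n <= j)%N) F j.
Proof. by move=> ->; apply: eq_bigl => j; rewrite ltnNge; case: (n <= j)%N. Qed.

Lemma sum_blockA (k : I) (F : I -> R) : (n <= k)%N ->
  \sum_(j : I | (j < n)%N != (k < n)%N) F j = \sum_(j : I | (j < n)%N) F j.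
Proof. by rewrite leqNgt => /negbTE ->; apply: eq_bigl => j; case: (j < n)%N. Qed.

Lemma row_expand (k : I) (w : I -> R) :
  \sum_(j : I) V k j * w j =
  V k k * w k + \sum_(j : I | (j < n)%N != (k < n)%N) V k j * w j.
Proof. by rewrite (bigD1 k) //= sum_offdiag // => j ->; rewrite mul0r. Qed.

Lemma vlastE (k : I) :
  vlast V k = V k k - \sum_(j : I | (j < n)%N != (k < n)%N) V k j.
Proof. by rewrite /vlast sum_offdiag. Qed.

Lemma vlast_A (i : I) : (i < n)%N -> vlast V i = V i i - \sum_(j : I | (n <= j)%N) V i j.
Proof. by move=> iA; rewrite vlastE sum_blockB. Qed.

Lemma diag_B (j : I) : (n <= j)%N -> V j j = \sum_(i : I | (i < n)%N) V i j.
Proof. by case: V_L => _ [_ [_ [_ [_ [_ Vv]]]]]; apply: Vv. Qed.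

Lemma vlast_B (j : I) : (n <= j)%N -> vlast V j = 0.
Proof.
move=> jB; rewrite vlastE sum_blockA // diag_B //.
by under eq_bigr => i _ do rewrite V_sym; rewrite subrr.
Qed.

Lemma vlast_bounds (k : I) : 0 <= vlast V k <= M.
Proof.
case: (ltnP k n) => [kA|kB]; last by rewrite vlast_B // lexx ltW ?M_gt0.
case: V_L => _ [_ [_ [_ [Viv [Vn _]]]]]; rewrite vlast_A //.
have [k_lt|k_ge] := ltnP k n.-1.
  by case/andP: (Viv k k_lt) => mv ->; rewrite (le_trans (ltW m_gt0) mv).
have kn : (k : nat) = n.-1 by lia.
by rewrite (Vn k kn) subrr lexx ltW ?M_gt0.
Qed.

Lemma vlast_ge (i : I) : (i < n.-1)%N -> m <= vlast V i.
Proof.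
move=> i_lt; have iA : (i < n)%N by lia.
by case: V_L => _ [_ [_ [_ [Viv _]]]]; rewrite vlast_A //; case/andP: (Viv i i_lt).
Qed.

Lemma card_blockA : \sum_(i : I | (i < n)%N) (1 : R) = n%:R.
Proof.
have n_le : (n <= dimL n)%N by rewrite -addnn; lia.
rewrite -(big_ord_widen_cond (dimL n) xpredT (fun _ => (1 : R)) n_le) /=.
by rewrite sumr_const card_ord.
Qed.

Lemma card_blockB : (0 < n)%N -> \sum_(j : I | (n <= j)%N) (1 : R) = n%:R - 1.
Proof.
move=> n_gt0.
have : \sum_(j : I) (1 : R) = n%:R + \sum_(j : I | (n <= j)%N) 1.
  rewrite (bigID (fun j : I => (j < n)%N)) /= card_blockA; congr (_ + _).
  by apply: eq_bigl => j; rewrite -leqNgt.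
have -> : dimL n = (n + n.-1)%N by rewrite -addnn; lia.
rewrite sumr_const card_ord natrD => /addrI <-.
by rewrite -{2}(prednK n_gt0) -natr1 addrK.
Qed.

Definition blocksign (k : I) : R := if (k < n)%N then 1 else -1.

Lemma row_blocksign (k : I) : \sum_(j : I) V k j * blocksign j = vlast V k.
Proof.
rewrite row_expand vlastE /blocksign.
have [kA|kB] : (k < n)%N \/ (n <= k)%N by case: ltnP; auto.
  rewrite !(sum_blockB _ kA) kA mulr1 -sumrN; congr (_ + _); apply: eq_bigr => j.
  by move=> jB; rewrite ltnNge jB mulrN1.
rewrite !(sum_blockA _ kB) ltnNge kB /= mulrN1 diag_B //.
under eq_bigr => i -> do rewrite mulr1.
by rewrite addrC; congr (_ - _); apply: eq_bigr => i _; rewrite V_sym.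
Qed.

Lemma diag_A_le (i : I) : (i < n)%N -> V i i <= n%:R * M.
Proof.
move=> iA; have n_gt0 : (0 < n)%N by apply: leq_ltn_trans iA.
have : \sum_(j : I | (n <= j)%N) V i j <= (n%:R - 1) * M.
  rewrite -(card_blockB n_gt0) mulr_suml; apply: ler_sum => j jB.
  by rewrite mul1r; case/andP: (V_cross_bounds iA jB).
have /andP[_ a_le] := vlast_bounds i.
rewrite vlast_A // in a_le; lra.
Qed.

Lemma diag_B_ge (j : I) : (n <= j)%N -> (n%:R - 1) * m <= V j j.
Proof.
move=> jB; rewrite diag_B // -card_blockA.
apply: (ler_sum_but_one_cst (Q := fun i : I => (j : nat) == (n + i)%N)).
- exact: ltW.
- by move=> i1 i2 _ _ /eqP-> /eqP/addnI; apply: val_inj.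
- by move=> i iA; case/andP: (V_cross_bounds iA jB).
- by move=> i iA; apply: V_cross_ge.
Qed.

Lemma diag_ge (k : I) : (n%:R - 2) * m <= V k k.
Proof.
have [kA|kB] : (k < n)%N \/ (n <= k)%N by case: ltnP; auto.
  have n_gt0 : (0 < n)%N by apply: leq_ltn_trans kA.
  have : (n%:R - 2) * m <= \sum_(j : I | (n <= j)%N) V k j.
    have -> : n%:R - 2 = n%:R - 1 - 1 :> R by ring.
    rewrite -(card_blockB n_gt0).
    apply: (ler_sum_but_one_cst (Q := fun j : I => (j : nat) == (n + k)%N)).
    - exact: ltW.
    - by move=> j1 j2 _ _ /eqP e1 /eqP e2; apply: val_inj; rewrite /= e1 e2.
    - by move=> j jB; case/andP: (V_cross_bounds kA jB).
    - by move=> j jB; apply: V_cross_ge.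
  have /andP[a_ge0 _] := vlast_bounds k.
  by rewrite vlast_A // in a_ge0; lra.
have := diag_B_ge kB; have := m_gt0; lra.
Qed.

Lemma vcorner_A : vcorner V = \sum_(i : I | (i < n)%N) vlast V i.
Proof.
rewrite /vcorner (bigID (fun i : I => (i < n)%N)) /= [X in _ + X]big1 ?addr0 //.
by move=> i; rewrite -leqNgt; apply: vlast_B.
Qed.

Lemma vcorner_ge : (n%:R - 1) * m <= vcorner V.
Proof.
rewrite vcorner_A -card_blockA.
apply: (ler_sum_but_one_cst (Q := fun i : I => (i : nat) == n.-1)).
- exact: ltW.
- by move=> i1 i2 _ _ /eqP e1 /eqP e2; apply: val_inj; rewrite /= e1 e2.
- by move=> i _; case/andP: (vlast_bounds i).
- by move=> i iA /eqP i_ne; apply: vlast_ge; lia.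
Qed.

Section MaxPrinciple.

Variables (x r : I -> R) (phi : R).
Hypothesis rowA : forall i : I, (i < n)%N ->
  V i i * x i - \sum_(j : I | (n <= j)%N) V i j * x j = r i.
Hypothesis rowB : forall j : I, (n <= j)%N ->
  V j j * x j - \sum_(i : I | (i < n)%N) V i j * x i = r j.
Hypothesis r_le : forall k, `|r k| <= phi.

Lemma vlast_dot : \sum_(i : I | (i < n)%N) vlast V i * x i = \sum_k r k.
Proof.
have crossA : \sum_(i : I | (i < n)%N) \sum_(j : I | (n <= j)%N) V i j * x j =
              \sum_(j : I | (n <= j)%N) V j j * x j.
  by rewrite exchange_big; apply: eq_bigr => j jB; rewrite diag_B // mulr_suml.
have crossB : \sum_(j : I | (n <= j)%N) \sum_(i : I | (i < n)%N) V i j * x i =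
    \sum_(i : I | (i < n)%N) V i i * x i - \sum_(i : I | (i < n)%N) vlast V i * x i.
  rewrite exchange_big -sumrB; apply: eq_bigr => i iA.
  by rewrite -mulrBl vlast_A // subKr mulr_suml.
have -> : \sum_k r k = \sum_(i : I | (i < n)%N) r i + \sum_(j : I | (n <= j)%N) r j.
  rewrite (bigID (fun k : I => (k < n)%N)) /=; congr (_ + _).
  by apply: eq_bigl => j; rewrite -leqNgt.
by rewrite -(eq_bigr _ rowA) -(eq_bigr _ rowB) !sumrB crossA crossB; ring.
Qed.

Lemma blockB_le (hi : R) : (forall i : I, (i < n)%N -> x i <= hi) ->
  forall j : I, (n <= j)%N -> x j <= hi + phi / ((n%:R - 1) * m).
Proof.
move=> x_le j jB; rewrite -lerBlDl.
have n_gt1 := block_B_n_gt1 jB.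
have nm_gt0 : 0 < (n%:R - 1) * m.
  by rewrite mulr_gt0 // subr_gt0 (ltr_nat R 1).
apply: (ler_div_of_mul_le nm_gt0 (diag_B_ge jB)); first exact: le_trans (r_le j).
have : \sum_(i : I | (i < n)%N) V i j * (x i - hi) <= 0.
  apply: sumr_le0 => i iA; rewrite mulr_ge0_le0 ?subr_le0 ?x_le //.
  have ij : i != j by apply: contraTneq jB => <-; rewrite -ltnNge.
  by case/andP: (V_offdiag_bounds ij).
have /ler_normlP[_ rj_le] := r_le j.
rewrite -(rowB jB) diag_B // in rj_le *.
under eq_bigr do rewrite mulrBr.
rewrite sumrB -mulr_suml mulrBr; lra.
Qed.

(* Row i weights every vertex of the second block except n + i by at least m. *)
Lemma gap_le (i : I) (lo hi : R) : (i < n)%N -> x i <= hi -> lo <= 0 <= hi ->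
  (forall j : I, (n <= j)%N -> lo <= x j <= hi) ->
  m * (\sum_(j : I | (n <= j)%N) (hi - x j) - (hi - lo)) - phi <= n%:R * M * (hi - x i).
Proof.
move=> iA xi_le /andP[lo_le0 hi_ge0] x_bd.
have split_row : V i i * (hi - x i) =
    vlast V i * hi + \sum_(j : I | (n <= j)%N) V i j * (hi - x j) - r i.
  have -> : \sum_(j : I | (n <= j)%N) V i j * (hi - x j) =
      (\sum_(j : I | (n <= j)%N) V i j) * hi - \sum_(j : I | (n <= j)%N) V i j * x j.
    by rewrite mulr_suml -sumrB; apply: eq_bigr => j _; rewrite mulrBr.
  by rewrite -(rowA iA) vlast_A //; ring.
have sum_ge : m * (\sum_(j : I | (n <= j)%N) (hi - x j) - (hi - lo)) <=
              \sum_(j : I | (n <= j)%N) V i j * (hi - x j).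
  apply: (ler_sum_but_one (Q := fun j : I => (j : nat) == (n + i)%N)).
  - exact: ltW.
  - by rewrite subr_ge0 (le_trans lo_le0).
  - by move=> j1 j2 _ _ /eqP e1 /eqP e2; apply: val_inj; rewrite /= e1 e2.
  - by move=> j jB; case/andP: (V_cross_bounds iA jB).
  - by move=> j jB; apply: V_cross_ge.
  - by move=> j jB; case/andP: (x_bd j jB); lra.
have diag_le : V i i * (hi - x i) <= n%:R * M * (hi - x i).
  by rewrite ler_wpM2r ?diag_A_le // subr_ge0.
have := mulr_ge0 (proj1 (andP (vlast_bounds i))) hi_ge0.
have /ler_normlP[_ ri_le] := r_le i.
lra.
Qed.

Lemma blockA_lb_le (sig lo : R) : (1 < n)%N -> `|\sum_k r k| <= sig ->
  (forall i : I, (i < n)%N -> lo <= x i) -> lo <= sig / ((n%:R - 1) * m).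
Proof.
move=> n_gt1 sum_le lo_le.
have nm_gt0 : 0 < (n%:R - 1) * m by rewrite mulr_gt0 // subr_gt0 (ltr_nat R 1).
apply: (ler_div_of_mul_le nm_gt0 vcorner_ge); first exact: le_trans sum_le.
have /ler_normlP[_ sum_le'] := sum_le.
apply: le_trans sum_le'; rewrite -vlast_dot vcorner_A mulr_suml.
by apply: ler_sum => i iA; rewrite ler_wpM2l ?lo_le //; case/andP: (vlast_bounds i).
Qed.

End MaxPrinciple.

Definition sol_bound (phi sig : R) : R :=
  2 * (phi + n%:R * M * ((phi + sig) / ((n%:R - 1) * m))) / ((n%:R - 3) * m).

Section MaxBound.

Hypothesis n_gt3 : (3 < n)%N.
Variables (x r : I -> R) (phi sig : R).
Hypothesis rowA : forall i : I, (i < n)%N ->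
  V i i * x i - \sum_(j : I | (n <= j)%N) V i j * x j = r i.
Hypothesis rowB : forall j : I, (n <= j)%N ->
  V j j * x j - \sum_(i : I | (i < n)%N) V i j * x i = r j.
Hypothesis r_le : forall k, `|r k| <= phi.
Hypothesis sum_r_le : `|\sum_k r k| <= sig.

Let rowA_opp (i : I) : (i < n)%N ->
  V i i * - x i - \sum_(j : I | (n <= j)%N) V i j * - x j = - r i.
Proof.
move=> iA; under eq_bigr do rewrite mulrN.
by rewrite sumrN mulrN -(rowA iA); ring.
Qed.

Let rowB_opp (j : I) : (n <= j)%N ->
  V j j * - x j - \sum_(i : I | (i < n)%N) V i j * - x i = - r j.
Proof.
move=> jB; under eq_bigr do rewrite mulrN.
by rewrite sumrN mulrN -(rowB jB); ring.
Qed.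

Let r_opp_le k : `|- r k| <= phi. Proof. by rewrite normrN. Qed.

Let sum_r_opp_le : `|\sum_k - r k| <= sig. Proof. by rewrite sumrN normrN. Qed.

Let n_gt1 : (1 < n)%N. Proof. exact: leq_trans n_gt3. Qed.

Let nm_gt0 : 0 < (n%:R - 1) * m.
Proof. by rewrite mulr_gt0 // subr_gt0 (ltr_nat R 1). Qed.

Local Notation eps_r := (phi / ((n%:R - 1) * m)).
Local Notation eps_s := (sig / ((n%:R - 1) * m)).

Let eps_r_ge0 : 0 <= eps_r.
Proof.
have i0A : (0 < dimL n)%N by rewrite -addnn; lia.
exact: divr_ge0 (le_trans (normr_ge0 _) (r_le (Ordinal i0A))) (ltW nm_gt0).
Qed.

Let eps_s_ge0 : 0 <= eps_s.
Proof. exact: divr_ge0 (le_trans (normr_ge0 _) sum_r_le) (ltW nm_gt0). Qed.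

Section Extremes.

Variables (i1 i2 : I).
Hypotheses (i1A : (i1 < n)%N) (i2A : (i2 < n)%N).
Hypothesis x_A_bd : forall i : I, (i < n)%N -> x i2 <= x i <= x i1.

Local Notation hi := (x i1 + (eps_r + eps_s)).
Local Notation lo := (x i2 - (eps_r + eps_s)).

Lemma x_bounds (k : I) : lo <= x k <= hi.
Proof.
have er := eps_r_ge0; have es := eps_s_ge0.
have [kA|kB] : (k < n)%N \/ (n <= k)%N by case: ltnP; auto.
  by case/andP: (x_A_bd kA) => x_ge x_le; apply/andP; split; lra.
have x_le := blockB_le rowB r_le (fun i iA => proj2 (andP (x_A_bd iA))) kB.
have x_ge : - x k <= - x i2 + eps_r.
  apply: (blockB_le rowB_opp r_opp_le _ kB) => i iA.
  by rewrite lerN2; case/andP: (x_A_bd iA).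
apply/andP; split; lra.
Qed.

Lemma lo_le0_le_hi : lo <= 0 <= hi.
Proof.
have min_le : x i2 <= eps_s.
  by apply: (blockA_lb_le rowA rowB n_gt1 sum_r_le) => i iA; case/andP: (x_A_bd iA).
have max_ge : - x i1 <= eps_s.
  apply: (blockA_lb_le rowA_opp rowB_opp n_gt1 sum_r_opp_le) => i iA.
  by rewrite lerN2; case/andP: (x_A_bd iA).
have er := eps_r_ge0; have es := eps_s_ge0.
apply/andP; split; lra.
Qed.

Lemma range_le : hi - lo <= sol_bound phi sig.
Proof.
have /andP[lo_le0 hi_ge0] := lo_le0_le_hi.
have gap1 := gap_le rowA r_le i1A (proj2 (andP (x_bounds i1))) lo_le0_le_hi
                    (fun j _ => x_bounds j).
have gap2 : m * (\sum_(j : I | (n <= j)%N) (- lo - - x j) - (- lo - - hi)) - phi <=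
            n%:R * M * (- lo - - x i2).
  apply: (gap_le rowA_opp r_opp_le i2A).
  - by rewrite lerN2; case/andP: (x_bounds i2).
  - by rewrite !oppr_cp0 hi_ge0.
  - by move=> j jB; rewrite !lerN2 andbC; apply: x_bounds.
have sumB : \sum_(j : I | (n <= j)%N) (hi - x j) +
            \sum_(j : I | (n <= j)%N) (- lo - - x j) = (n%:R - 1) * (hi - lo).
  set D := hi - lo; rewrite -[in RHS](card_blockB (ltnW n_gt1)) mulr_suml -big_split.
  by apply: eq_bigr => j _; rewrite /D /=; ring.
have n3m_gt0 : 0 < (n%:R - 3) * m by rewrite mulr_gt0 // subr_gt0 (ltr_nat R 3).
rewrite /sol_bound (mulrDl phi sig) ler_pdivlMr //.
have eD : - lo - - hi = hi - lo by ring.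
have eE2 : - lo - - x i2 = eps_r + eps_s by ring.
have eE1 : hi - x i1 = eps_r + eps_s by ring.
rewrite eD eE2 in gap2; rewrite eE1 in gap1.
have := congr1 (fun s => m * s) sumB; move: gap1 gap2 => /=.
set S1 := \sum_(j : I | _) (hi - _); set S2 := \sum_(j : I | _) (_ - _).
set D := hi - lo; set E := eps_r + eps_s; lra.
Qed.

End Extremes.

Lemma abs_x_le (k : I) : `|x k| <= sol_bound phi sig.
Proof.
have i0_lt : (0 < dimL n)%N by rewrite -addnn; lia.
have i0A : ((Ordinal i0_lt : nat) < n)%N by apply: leq_trans n_gt3.
have [i1 i1A max1] := arg_maxP (P := fun i : I => (i < n)%N) x i0A.
have [i2 i2A min2] := arg_minP (P := fun i : I => (i < n)%N) x i0A.
have x_A_bd (i : I) : (i < n)%N -> x i2 <= x i <= x i1.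
  by move=> iA; apply/andP; split; [exact: min2 | exact: max1].
have /andP[lo_le0 hi_ge0] := lo_le0_le_hi x_A_bd.
have /andP[lo_le hi_ge] := x_bounds x_A_bd k.
apply: le_trans (range_le i1A i2A x_A_bd); apply/ler_normlP; split; lra.
Qed.

End MaxBound.

Section SignedSystem.

Variables (w f : I -> R).
Hypothesis Vw : forall k : I, \sum_j V k j * w j = f k.

Lemma signed_rowA (i : I) : (i < n)%N ->
  V i i * (blocksign i * w i) - \sum_(j : I | (n <= j)%N) V i j * (blocksign j * w j) =
  blocksign i * f i.
Proof.
move=> iA; rewrite -Vw row_expand (sum_blockB _ iA) /blocksign iA !mul1r.
rewrite -sumrN; congr (_ + _); apply: eq_bigr => j jB.
by rewrite ltnNge jB mulN1r mulrN opprK.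
Qed.

Lemma signed_rowB (j : I) : (n <= j)%N ->
  V j j * (blocksign j * w j) - \sum_(i : I | (i < n)%N) V i j * (blocksign i * w i) =
  blocksign j * f j.
Proof.
move=> jB; rewrite -Vw row_expand (sum_blockA _ jB) /blocksign ltnNge jB /=.
rewrite mulN1r mulrN mulN1r opprD; congr (_ - _).
by apply: eq_bigr => i ->; rewrite mul1r V_sym.
Qed.

Lemma solution_bound (phi sig : R) : (3 < n)%N ->
  (forall k, `|f k| <= phi) -> `|\sum_k blocksign k * f k| <= sig ->
  forall k, `|w k| <= sol_bound phi sig.
Proof.
move=> n_gt3 f_le sum_le k.
have sign_norm (y : I -> R) l : `|blocksign l * y l| = `|y l|.
  by rewrite normrM /blocksign; case: ifP; rewrite ?normrN normr1 mul1r.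
rewrite -sign_norm; apply: (abs_x_le n_gt3 signed_rowA signed_rowB _ sum_le).
by move=> l; rewrite sign_norm.
Qed.

End SignedSystem.

Lemma sol_bound0 : sol_bound 0 0 = 0.
Proof. by rewrite /sol_bound !(addr0, mulr0, mul0r). Qed.

Lemma V_unit : (3 < n)%N -> V \in unitmx.
Proof.
move=> n_gt3; rewrite -row_free_unit; apply: inj_row_free => v vV0.
apply/rowP => k; apply/eqP; rewrite mxE -normr_le0 -sol_bound0.
apply: (solution_bound (f := fun _ => 0)) => // [l | l | ].
- have := congr1 (fun A : 'rV_(dimL n) => A 0 l) vV0; rewrite !mxE => vl0.
  by rewrite -[RHS]vl0; apply: eq_bigr => j _; rewrite mulrC V_sym.
- by rewrite normr0.
- by rewrite big1 ?normr0 // => l _; rewrite mulr0.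
Qed.

Lemma Smat_entry (k l : I) :
  Smat V k l = (k == l)%:R / V l l + blocksign k * blocksign l / vcorner V.
Proof.
rewrite /Smat mxE /blocksign.
case: (eqVneq k l) => [->|_]; rewrite ?eqxx /=; first by case: (l < n)%N; ring.
by case: (k < n)%N; case: (l < n)%N => /=; ring.
Qed.

Lemma sum_blocksign_vlast : \sum_k blocksign k * vlast V k = vcorner V.
Proof.
rewrite /vcorner.
apply: eq_bigr => k _; rewrite /blocksign.
by case: ltnP => [_|kB]; rewrite ?mul1r // vlast_B // mulr0.
Qed.

Definition residual (l k : I) : R :=
  (k == l)%:R - V k l / V l l - blocksign l * vlast V k / vcorner V.

Section Residual.

Hypothesis n_gt3 : (3 < n)%N.

Let n2m_gt0 : 0 < (n%:R - 2) * m.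
Proof. by rewrite mulr_gt0 // subr_gt0 (ltr_nat R 2) (leq_trans _ n_gt3). Qed.

Let vcorner_gt0 : 0 < vcorner V.
Proof.
apply: lt_le_trans vcorner_ge; rewrite mulr_gt0 // subr_gt0 (ltr_nat R 1).
exact: leq_trans n_gt3.
Qed.

Let ratio_bounds (a b : R) : 0 <= a <= M -> (n%:R - 2) * m <= b ->
  0 <= a / b <= M / ((n%:R - 2) * m).
Proof.
move=> /andP[a_ge0 a_le] b_ge; have b_gt0 := lt_le_trans n2m_gt0 b_ge.
rewrite divr_ge0 ?(ltW b_gt0) //=.
apply: (@le_trans _ _ (M / b)); first by rewrite ler_wpM2r // invr_ge0 ltW.
by rewrite ler_wpM2l ?(ltW M_gt0) // lef_pV2 ?posrE.
Qed.

Lemma residualE (l k : I) :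
  \sum_j V k j * (invmx V - Smat V) j l = residual l k.
Proof.
have -> : \sum_j V k j * (invmx V - Smat V) j l = (V *m (invmx V - Smat V)) k l.
  by rewrite mxE.
rewrite /residual mulmxBr mulmxV ?V_unit // !mxE.
under eq_bigr do rewrite Smat_entry mulrDr.
rewrite big_split /= (bigD1 l) //= eqxx big1 => [|j /negbTE->]; last by rewrite mul0r mulr0.
have -> : \sum_j V k j * (blocksign j * blocksign l / vcorner V) =
          blocksign l * (\sum_j V k j * blocksign j) / vcorner V.
  by rewrite mulr_sumr mulr_suml; apply: eq_bigr => j _; ring.
by rewrite row_blocksign /=; ring.
Qed.

Lemma residual_le (l k : I) : `|residual l k| <= 2 * M / ((n%:R - 2) * m).
Proof.
have vc_ge : (n%:R - 2) * m <= vcorner V.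
  apply: le_trans vcorner_ge; rewrite ler_wpM2r ?(ltW m_gt0) // lerD2l lerN2.
  by rewrite (ler_nat R 1 2).
have sign_l : `|blocksign l| = 1 :> R.
  by rewrite /blocksign; case: (l < n)%N; rewrite ?normrN normr1.
have /andP[ak_ge0 ak_le] := ratio_bounds (vlast_bounds k) vc_ge.
have -> : 2 * M / ((n%:R - 2) * m) = M / ((n%:R - 2) * m) + M / ((n%:R - 2) * m).
  by ring.
case: (eqVneq k l) => [kl|kl].
  have Vll_gt0 := lt_le_trans n2m_gt0 (diag_ge l).
  have -> : residual l k = - (blocksign l * (vlast V k / vcorner V)).
    by rewrite /residual kl eqxx divff ?lt0r_neq0 //=; ring.
  by rewrite normrN (normrM (blocksign l)) sign_l mul1r ger0_norm //; lra.
have /andP[r_ge0 r_le] := ratio_bounds (V_offdiag_bounds kl) (diag_ge l).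
have -> : residual l k = - (V k l / V l l) - blocksign l * (vlast V k / vcorner V).
  by rewrite /residual (negbTE kl) /=; ring.
apply: le_trans (ler_normB _ _) _.
by rewrite normrN (normrM (blocksign l)) sign_l mul1r !ger0_norm //; lra.
Qed.

Lemma residual_signed_sum (l : I) :
  `|\sum_k blocksign k * residual l k| <= M / ((n%:R - 2) * m).
Proof.
have -> : \sum_k blocksign k * residual l k =
    \sum_k blocksign k * (k == l)%:R - (\sum_k V l k * blocksign k) / V l l -
    blocksign l * (\sum_k blocksign k * vlast V k) / vcorner V.
  rewrite mulr_sumr !mulr_suml -!sumrB; apply: eq_bigr => k _.
  by rewrite /residual V_sym; ring.
rewrite row_blocksign sum_blocksign_vlast -mulrA divff ?(lt0r_neq0 vcorner_gt0) // mulr1.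
rewrite (bigD1 l) //= eqxx big1 => [|k /negbTE->]; last by rewrite mulr0.
have /andP[a_ge0 a_le] := ratio_bounds (vlast_bounds l) (diag_ge l).
by rewrite /= mulr1 addr0 addrAC subrr add0r normrN ger0_norm.
Qed.

Lemma inv_sub_Smat_le (k l : I) :
  `|(invmx V - Smat V) k l| <= sol_bound (2 * M / ((n%:R - 2) * m)) (M / ((n%:R - 2) * m)).
Proof.
exact: (solution_bound (w := fun j => (invmx V - Smat V) j l) (residualE l) n_gt3
         (residual_le l) (residual_signed_sum l)).
Qed.

End Residual.

Lemma sol_bound_residual_le : (3 < n)%N ->
  sol_bound (2 * M / ((n%:R - 2) * m)) (M / ((n%:R - 2) * m))
    <= 54 * M ^+ 2 / (m ^+ 3 * (n.-1)%:R ^+ 2).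
Proof.
move=> n_gt3; have n_gt0 : (0 < n)%N by apply: leq_trans n_gt3.
have -> : (n.-1)%:R = n%:R - 1 :> R by rewrite -{2}(prednK n_gt0) -natr1 addrK.
rewrite /sol_bound.
have t_ge4 : 4 <= n%:R :> R by rewrite (ler_nat R 4).
move: (n%:R : R) t_ge4 => t t_ge4; have m_pos := m_gt0; have M_pos := M_gt0.
have t1 : t - 1 != 0 by rewrite lt0r_neq0 // subr_gt0; lra.
have t2 : t - 2 != 0 by rewrite lt0r_neq0 // subr_gt0; lra.
have t3 : t - 3 != 0 by rewrite lt0r_neq0 // subr_gt0; lra.
have m0 := lt0r_neq0 m_gt0.
rewrite -subr_ge0.
have -> : 54 * M ^+ 2 / (m ^+ 3 * (t - 1) ^+ 2) -
    2 * (2 * M / ((t - 2) * m) + t * M * ((2 * M / ((t - 2) * m) + M / ((t - 2) * m))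
      / ((t - 1) * m))) / ((t - 3) * m) =
    2 * M * (27 * M * (t - 2) * (t - 3) - (t - 1) * (2 * (t - 1) * m + 3 * t * M))
    / (m ^+ 3 * (t - 1) ^+ 2 * (t - 2) * (t - 3)).
  by field; rewrite ?m0 ?t1 ?t2 ?t3.
apply: divr_ge0; last by rewrite !mulr_ge0 ?exprn_ge0 //; lra.
apply: mulr_ge0; first lra.
have : 0 <= (t - 4) * (11 * t - 20) by apply: mulr_ge0; lra.
have : (t - 1) ^+ 2 * m <= (t - 1) ^+ 2 * M by rewrite ler_wpM2l ?exprn_ge0 //; lra.
nra.
Qed.

End BlockMatrix.

Theorem proposition1 (R : realFieldType) :
  exists c1 : R, 0 < c1 /\
  forall m M : nat -> R,
    (forall n, 0 < m n /\ m n <= M n) ->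
    (* M_n / m_n = o(n) *)
    (forall eps : R, 0 < eps ->
       exists N : nat, forall n : nat, (N <= n)%N -> M n / m n <= eps * n%:R) ->
    exists N : nat, forall n : nat, (N <= n)%N ->
      forall V : 'M[R]_(dimL n), @inL R n (m n) (M n) V ->
        V \in unitmx /\
        mxnorm (invmx V - Smat V) <= c1 * M n ^+ 2 / (m n ^+ 3 * (n.-1)%:R ^+ 2).
Proof.
exists 54; split => // m M mM _; exists 4%N => n n_gt3 V V_L.
have [m_gt0 m_le_M] := mM n.
split; first exact: V_unit m_gt0 m_le_M V_L n_gt3.
have entry_le k l := le_trans (inv_sub_Smat_le m_gt0 m_le_M V_L n_gt3 k l)
                              (sol_bound_residual_le m_gt0 m_le_M n_gt3).
have i0_lt : (0 < dimL n)%N by rewrite -addnn; lia.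
have bound_ge0 := le_trans (normr_ge0 _) (entry_le (Ordinal i0_lt) (Ordinal i0_lt)).
by apply: bigmax_le => // k _; apply: bigmax_le => // l _; apply: entry_le.
Qed.
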